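(* Fix $n\ge1$. The set $\mathcal S_n=\{H\in\mathcal H: X_n(H)=0,\ H^{(n)}=z^n\}$ coincides with the set of $H\in\mathcal H$ satisfying $H^{(n)}=z^n$ and $$H^{(j+n)}=z^nH^{(j)}-\sum_{l=1}^{n}H^j_lH^{(n-l)}\qquad\text{for all }j\ge0.$$ In particular, the map $H\mapsto(H^{(1)},\dots,H^{(n-1)})$ is a bijection from $\mathcal S_n$ onto the set of $(n-1)$-tuples of Laurent series of the form $H^{(a)}=z^a+\sum_{l\ge1}H^a_lz^{-l}$ (with arbitrary coefficients).
   Context: Let $z$ be a formal variable and $\mathcal L$ the space of formal Laurent series $\sum_{j\le N} l_j z^j$ (finitely many positive powers of $z$). Let $\mathcal H$ be the set of sequences $H=(H^{(k)})_{k\ge0}$ of elements of $\mathcal L$ with $H^{(0)}=1$ and, for $k\ge1$, $H^{(k)}=z^k+\sum_{l\ge1}H^k_l z^{-l}$; the coefficients $H^k_l$ are coordinates on $\mathcal H$, and we set $H^0_l=0$. The central system (CS) is the family of vector fields $X_j$, $j\ge1$, on $\mathcal H$, with associated times $t_j$, defined by $$\frac{\partial H^{(k)}}{\partial t_j}=H^{(j+k)}-H^{(j)}H^{(k)}+\sum_{l=1}^{k}H^j_lH^{(k-l)}+\sum_{l=1}^{j}H^k_lH^{(j-l)},\qquad k\ge0;$$ the right-hand side contains only negative powers of $z$, so this determines the components $X_j(H^k_l)$. *)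

From HB Require Import structures.
From mathcomp Require Import all_boot all_order all_algebra.
From mathcomp Require Import zify.
Set Implicit Arguments. Unset Strict Implicit. Unset Printing Implicit Defensive.
Import Order.TTheory GRing.Theory Num.Theory.
Local Open Scope ring_scope.

Section Laurent.
Variable R : comNzRingType.

(* A formal Laurent series  sum_{j <= N} l_j z^j  : coefficient function on
   the integers together with a bound N above which all coefficients vanish. *)
Record laurent := Laurent {
  lcoef : int -> R;
  lbound : int;
  lboundP : forall m : int, lbound < m -> lcoef m = 0 }.

Definition leq_ser (f g : laurent) : Prop := forall m, lcoef f m = lcoef g m.

Definition lzero : laurent.
Proof. by refine (@Laurent (fun _ => 0) 0 _). Defined.

Definition lmonom (k : int) : laurent.
Proof.
refine (@Laurent (fun m => (m == k)%:R) k _).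
by move=> m hm; rewrite gt_eqF.
Defined.

Definition ladd (f g : laurent) : laurent.
Proof.
refine (@Laurent (fun m => lcoef f m + lcoef g m)
          (Num.max (lbound f) (lbound g)) _).
move=> m; rewrite gt_max => /andP[hf hg].
by rewrite !lboundP // addr0.
Defined.

Definition lscale (c : R) (f : laurent) : laurent.
Proof.
refine (@Laurent (fun m => c * lcoef f m) (lbound f) _).
by move=> m hm; rewrite lboundP // mulr0.
Defined.

Definition lsub (f g : laurent) : laurent := ladd f (lscale (-1) g).

(* Cauchy product: (fg)_m = sum_{i = m - Ng}^{Nf} f_i g_(m-i), a finite sum *)
Definition lmul_coef (f g : laurent) (m : int) : R :=
  let d := lbound f + lbound g - m in
  if (0 <= d) then
    \sum_(t < (absz d).+1) lcoef f (m - lbound g + t%:Z) * lcoef g (lbound g - t%:Z)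
  else 0.

Definition lmul (f g : laurent) : laurent.
Proof.
refine (@Laurent (lmul_coef f g) (lbound f + lbound g) _).
move=> m hm; rewrite /lmul_coef ifF //.
apply/negbTE; rewrite -ltNge; lia.
Defined.

Definition lsum (s : seq laurent) : laurent := foldr ladd lzero s.

(* ---------- the space H ----------
   A point H of H is given by its coordinates h k l = H^k_l (k >= 1, l >= 1);
   the values h 0 _ and h _ 0 are not coordinates and are never used. *)

Definition Hc (h : nat -> nat -> R) (k l : nat) : R :=
  if k == 0%N then 0 else h k l.

(* the Laurent series H^(k): H^(0) = 1, H^(k) = z^k + sum_{l>=1} H^k_l z^{-l} *)
Definition Hser (h : nat -> nat -> R) (k : nat) : laurent.
Proof.
refine (@Laurent (fun m : int =>
   if k == 0%N then (m == 0)%:R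
   else if m == k%:Z then 1
   else if m < 0 then h k (absz m) else 0) k%:Z _).
move=> m hm; case: ifP => [/eqP k0|k0].
  by subst k; rewrite gt_eqF.
rewrite gt_eqF // ifF //; apply/negbTE; rewrite -leNgt; lia.
Defined.

Definition CSrhs (h : nat -> nat -> R) (j k : nat) : laurent :=
  ladd (ladd (lsub (Hser h (j + k)) (lmul (Hser h j) (Hser h k)))
             (lsum [seq lscale (Hc h j l) (Hser h (k - l)) | l <- iota 1 k]))
       (lsum [seq lscale (Hc h k l) (Hser h (j - l)) | l <- iota 1 j]).

(* the component X_j(H^k_l) of the vector field X_j at H: the coefficient of
   z^{-l} in dH^(k)/dt_j *)
Definition Xcomp (h : nat -> nat -> R) (j k l : nat) : R :=
  lcoef (CSrhs h j k) (- (l%:Z)).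

Definition X_zero (h : nat -> nat -> R) (j : nat) : Prop :=
  forall k l : nat, (1 <= k)%N -> (1 <= l)%N -> Xcomp h j k l = 0.

Definition in_Sn (n : nat) (h : nat -> nat -> R) : Prop :=
  X_zero h n /\ leq_ser (Hser h n) (lmonom n%:Z).

Definition in_rec (n : nat) (h : nat -> nat -> R) : Prop :=
  leq_ser (Hser h n) (lmonom n%:Z) /\
  forall j : nat,
    leq_ser (Hser h (j + n))
      (lsub (lmul (lmonom n%:Z) (Hser h j))
            (lsum [seq lscale (Hc h j l) (Hser h (n - l)) | l <- iota 1 n])).

Definition H_eq (h h' : nat -> nat -> R) : Prop :=
  forall k : nat, leq_ser (Hser h k) (Hser h' k).

End Laurent.

(** If H^(n) = z^n then every H^n_l vanishes and H^(n) H^(k) = z^n H^(k), so the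
    coefficient of z^(-l) in X_n(H^(k)) is the difference between H^(k+n) and the
    right-hand side of the recursion.  The nonnegative parts of both sides are
    z^(k+n) anyway, hence X_n(H) = 0 is exactly the recursion.  The recursion
    computes H^(j+n) from H^(j) and H^(0), ..., H^(n-1), so H is determined by
    H^(1), ..., H^(n-1) (strong induction on k), and conversely any choice of these
    extends to a solution by defining the rows H^(k), k > n, recursively. *)

From mathcomp Require Import all_boot all_order all_algebra zify ring.
Set Implicit Arguments. Unset Strict Implicit. Unset Printing Implicit Defensive.
Import Order.TTheory GRing.Theory Num.Theory.
Local Open Scope ring_scope.

Section LaurentCoefficients.
Variable R : comNzRingType.
Implicit Types f g : laurent R.

Lemma lcoef_ladd f g m : lcoef (ladd f g) m = lcoef f m + lcoef g m.
Proof. by []. Qed.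

Lemma lcoef_lscale c f m : lcoef (lscale c f) m = c * lcoef f m.
Proof. by []. Qed.

Lemma lcoef_lsub f g m : lcoef (lsub f g) m = lcoef f m - lcoef g m.
Proof. by rewrite lcoef_ladd lcoef_lscale mulN1r. Qed.

Lemma lcoef_lsum (I : Type) (F : I -> laurent R) s m :
  lcoef (lsum [seq F i | i <- s]) m = \sum_(i <- s) lcoef (F i) m.
Proof. by elim: s => [|i s IHs]; rewrite ?big_nil ?big_cons //= -IHs. Qed.

Lemma lcoef_lmonom k m : lcoef (lmonom R k) m = (m == k)%:R.
Proof. by []. Qed.

Lemma lcoef_lmul_eql f f' g m :
  lbound f = lbound f' -> lcoef f =1 lcoef f' ->
  lcoef (lmul f g) m = lcoef (lmul f' g) m.
Proof.
move=> eq_bound eq_coef; rewrite /= /lmul_coef eq_bound; case: ifP => // _.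
by apply: eq_bigr => t _; rewrite eq_coef.
Qed.

Lemma lcoef_lmul_monom a f m : lcoef (lmul (lmonom R a) f) m = lcoef f (m - a).
Proof.
rewrite /= /lmul_coef /=; set d := a + lbound f - m; case: ifP => [d_ge0|d_lt0].
  pose top := Ordinal (ltnSn (absz d)).
  rewrite (bigD1 top) //= big1 => [|t t_neq_top].
    have -> : m - lbound f + (absz d)%:Z = a by rewrite /d in d_ge0 *; lia.
    by rewrite eqxx mul1r addr0; congr (lcoef f _); rewrite /d in d_ge0 *; lia.
  have /negPf-> : m - lbound f + (nat_of_ord t)%:Z != a.
    apply/eqP => E; move/eqP: t_neq_top; apply; apply/val_inj => /=.
    by rewrite /d in d_ge0 E *; lia.
  by rewrite mul0r.
by rewrite lboundP //; move/negbT: d_lt0; rewrite -ltNge; lia.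
Qed.

End LaurentCoefficients.

Section CentralSystem.
Variable R : comNzRingType.
Implicit Types h : nat -> nat -> R.

Lemma lcoef_Hser_nat h k p : lcoef (Hser h k) p%:Z = (p == k)%:R.
Proof.
rewrite /=; case: eqP => [->|_] //; rewrite eqz_nat.
by case: (p == k); rewrite // ltNge lez_nat.
Qed.

Lemma Hc_pos h k l : (0 < k)%N -> Hc h k l = h k l.
Proof. by move=> k_gt0; rewrite /Hc ifF //; apply/negbTE; lia. Qed.

Lemma lcoef_Hser_neg h k l :
  (0 < k)%N -> (0 < l)%N -> lcoef (Hser h k) (- l%:Z) = Hc h k l.
Proof.
move=> k_gt0 l_gt0; rewrite Hc_pos //=.
have /negPf-> : k != 0%N by lia.
have /negPf-> : - l%:Z != k%:Z by lia.
by rewrite ifT ?abszN //; lia.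
Qed.

Definition rec_ser h (n j : nat) : laurent R :=
  lsub (lmul (lmonom R n%:Z) (Hser h j))
       (lsum [seq lscale (Hc h j l) (Hser h (n - l)) | l <- iota 1 n]).

Lemma lcoef_rec_ser h n j m :
  lcoef (rec_ser h n j) m = lcoef (Hser h j) (m - n%:Z)
    - \sum_(l <- iota 1 n) Hc h j l * lcoef (Hser h (n - l)) m.
Proof. by rewrite lcoef_lsub lcoef_lmul_monom lcoef_lsum. Qed.

Lemma lcoef_rec_ser_nat h n j p :
  (0 < j)%N -> lcoef (rec_ser h n j) p%:Z = (p == j + n)%:R.
Proof.
move=> j_gt0; rewrite lcoef_rec_ser.
under eq_bigr do rewrite lcoef_Hser_nat.
case: (leqP n p) => [n_le_p|p_lt_n].
  rewrite big1_seq => [|l]; last first.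
    rewrite mem_iota => /andP[_ l_range].
    have /negPf-> : p != (n - l)%N by lia.
    by rewrite mulr0.
  have -> : p%:Z - n%:Z = (p - n)%N%:Z by lia.
  by rewrite lcoef_Hser_nat subr0; congr (_%:R); apply/eqP/eqP; lia.
(* only the term l = n - p of the sum survives, and it cancels the coefficient of z^(p-n) *)
have np_in : (n - p)%N \in iota 1 n by rewrite mem_iota; lia.
have -> : p%:Z - n%:Z = - (n - p)%N%:Z by lia.
rewrite lcoef_Hser_neg //; last by lia.
rewrite (bigD1_seq _ np_in (iota_uniq _ _)) /= big1_seq => [|l]; last first.
  rewrite mem_iota => /andP[l_neq l_range].
  have /negPf-> : p != (n - l)%N by move: l_neq; rewrite eqE /=; lia.
  by rewrite mulr0.
have -> : (p == n - (n - p))%N by apply/eqP; lia.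
have /negPf-> : p != (j + n)%N by lia.
by rewrite mulr1 addr0 subrr.
Qed.

Section CenteredFlow.
Variables (h : nat -> nat -> R) (n : nat).
Hypotheses (n_gt0 : (0 < n)%N) (Hn_monom : leq_ser (Hser h n) (lmonom R n%:Z)).

Lemma Hc_center l : (0 < l)%N -> Hc h n l = 0.
Proof.
move=> l_gt0; rewrite -lcoef_Hser_neg // Hn_monom lcoef_lmonom.
by have /negPf-> : - l%:Z != n%:Z by lia.
Qed.

(* Since H^(n) = z^n, the product H^(n) H^(k) is a shift and the sum over H^n_l vanishes. *)
Lemma lcoef_CSrhs_center k m :
  lcoef (CSrhs h n k) m = lcoef (Hser h (k + n)) m - lcoef (rec_ser h n k) m.
Proof.
rewrite 2!lcoef_ladd lcoef_lsub !lcoef_lsum.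
rewrite (@lcoef_lmul_eql _ _ (lmonom R n%:Z)) // big1_seq => [|l]; last first.
  by rewrite mem_iota => /andP[_ /andP[l_gt0 _]]; rewrite lcoef_lscale Hc_center ?mul0r.
rewrite lcoef_rec_ser lcoef_lmul_monom addnC.
under eq_bigr do rewrite lcoef_lscale.
by ring.
Qed.

Lemma rec_ser0 : leq_ser (Hser h (0 + n)) (rec_ser h n 0).
Proof.
move=> m; rewrite add0n Hn_monom lcoef_lmonom lcoef_rec_ser big1 => [|l _]; last first.
  by rewrite /Hc mul0r.
by rewrite subr0 /= subr_eq0.
Qed.

Lemma rec_ser_eqP k : (0 < k)%N ->
  leq_ser (Hser h (k + n)) (rec_ser h n k) <->
  (forall l, (0 < l)%N -> Xcomp h n k l = 0).
Proof.
move=> k_gt0; split=> [eq_ser l _|Xn_zero [p|p]].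
- by rewrite /Xcomp lcoef_CSrhs_center eq_ser subrr.
- by rewrite lcoef_Hser_nat lcoef_rec_ser_nat.
- by rewrite NegzE; apply: subr0_eq; rewrite -lcoef_CSrhs_center; exact: Xn_zero.
Qed.

End CenteredFlow.

Lemma in_Sn_recP h n : (0 < n)%N -> in_Sn n h <-> in_rec n h.
Proof.
move=> n_gt0; split=> [[Xn_zero Hn_monom]|[Hn_monom Hrec]]; split=> //.
  case=> [|j]; first exact: rec_ser0.
  by apply/(rec_ser_eqP n_gt0 Hn_monom) => // l; exact: Xn_zero.
move=> k l k_gt0; move: l; apply/(rec_ser_eqP n_gt0 Hn_monom k_gt0).
exact: Hrec.
Qed.

Lemma in_rec_uniq h h' n : (0 < n)%N -> in_rec n h -> in_rec n h' ->
  (forall a, (0 < a < n)%N -> leq_ser (Hser h a) (Hser h' a)) -> H_eq h h'.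
Proof.
move=> n_gt0 [Hn Hrec] [Hn' Hrec'] eq_init k.
elim/ltn_ind: k => k IHk m.
case: (posnP k) => [->|k_gt0] //.
case: (ltngtP k n) => [k_lt_n|n_lt_k|->]; last by rewrite Hn Hn'.
  by apply: eq_init; rewrite k_gt0.
have kn_gt0 : (0 < k - n)%N by lia.
have kn_lt_k : (k - n < k)%N by lia.
have -> : k = ((k - n) + n)%N by lia.
rewrite Hrec Hrec' !lcoef_rec_ser (IHk (k - n)%N) //.
congr (_ - _); apply: eq_big_seq => l; rewrite mem_iota => /andP[l_gt0 l_le_n].
by rewrite -!lcoef_Hser_neg // (IHk (k - n)%N) // (IHk (n - l)%N) //; lia.
Qed.

Section Extension.
Variables (n : nat) (c : nat -> nat -> R).
Hypothesis n_gt0 : (0 < n)%N.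

Definition initial_row (k : nat) : nat -> R := if k == n then (fun=> 0) else c k.

(* The coefficients of z^(-l) in the recursion for H^(j+n), given the coefficients r
   of H^(j); the H^(n-l') involved are initial rows, hence read off c. *)
Definition next_row (j : nat) (r : nat -> R) (l : nat) : R :=
  lcoef (Hser (fun=> r) j) (- l%:Z - n%:Z)
  - \sum_(l' <- iota 1 n) Hc (fun=> r) j l' * lcoef (Hser c (n - l')) (- l%:Z).

Fixpoint ext_fuel (fuel k : nat) : nat -> R :=
  if fuel is fuel'.+1 then
    if (k <= n)%N then initial_row k else next_row (k - n) (ext_fuel fuel' (k - n))
  else initial_row k.

Definition ext (k : nat) : nat -> R := ext_fuel k k.

Lemma ext_fuel_enough fuel fuel' k : (k <= fuel)%N -> (k <= fuel')%N ->
  ext_fuel fuel k = ext_fuel fuel' k.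
Proof.
elim: fuel fuel' k => [|fuel IH] [|fuel'] k /= k_le k_le'; try by have -> : k = 0%N by lia.
by case: ifP => // k_gt_n; congr next_row; apply: IH; lia.
Qed.

Lemma ext_small k : (k <= n)%N -> ext k = initial_row k.
Proof. by case: k => [|k] // k_le_n; rewrite /ext /= k_le_n. Qed.

Lemma ext_large k : (n < k)%N -> ext k = next_row (k - n) (ext (k - n)).
Proof.
case: k => [|k] // n_lt_k; rewrite /ext /= ifF; last by apply/negbTE; lia.
by rewrite (@ext_fuel_enough _ (k.+1 - n)) //; lia.
Qed.

Lemma lcoef_Hser_ext a m : (a < n)%N -> lcoef (Hser ext a) m = lcoef (Hser c a) m.
Proof.
by move=> a_lt_n; rewrite /= ext_small ?(ltnW a_lt_n) // /initial_row (ltn_eqF a_lt_n).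
Qed.

Lemma ext_Hn : leq_ser (Hser ext n) (lmonom R n%:Z).
Proof.
move=> m; rewrite /= ext_small // /initial_row eqxx ifF; last by apply/negbTE; lia.
by case: (m == n%:Z); case: (m < 0).
Qed.

Lemma ext_rec : in_rec n ext.
Proof.
split=> [|[|j]]; [exact: ext_Hn | exact: rec_ser0 ext_Hn | case=> p].
  by rewrite lcoef_Hser_nat lcoef_rec_ser_nat.
rewrite NegzE lcoef_Hser_neg // Hc_pos // ext_large; last by lia.
rewrite addnK /next_row lcoef_rec_ser; congr (_ - _).
apply: eq_big_seq => l; rewrite mem_iota => /andP[l_gt0 l_le_n].
by rewrite lcoef_Hser_ext //; lia.
Qed.

Lemma ext_init a l : (0 < a < n)%N -> ext a l = c a l.
Proof.
by move=> /andP[_ a_lt_n]; rewrite ext_small ?(ltnW a_lt_n) // /initial_row (ltn_eqF a_lt_n).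
Qed.

End Extension.

End CentralSystem.

Theorem mainTheorem6 (R : comNzRingType) (n : nat) (hn : (1 <= n)%N) :
  (forall h : nat -> nat -> R, in_Sn n h <-> in_rec n h) /\
  (forall h h' : nat -> nat -> R, in_Sn n h -> in_Sn n h' ->
     (forall a : nat, (1 <= a)%N -> (a <= n - 1)%N -> leq_ser (Hser h a) (Hser h' a)) ->
     H_eq h h') /\
  (forall c : nat -> nat -> R, exists h : nat -> nat -> R,
     in_Sn n h /\
     forall a l : nat, (1 <= a)%N -> (a <= n - 1)%N -> (1 <= l)%N -> h a l = c a l).
Proof.
split; first by move=> h; exact: in_Sn_recP.
split=> [h h' /(in_Sn_recP _ hn) Hrec /(in_Sn_recP _ hn) Hrec' eq_init|c].
  by apply: in_rec_uniq Hrec Hrec' _ => // a /andP[a_gt0 a_lt_n]; apply: eq_init; lia.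
exists (ext n c); split; first by apply/in_Sn_recP => //; exact: ext_rec.
by move=> a l a_gt0 a_lt_n _; apply: ext_init; lia.
Qed.
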